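(* Let $\Lambda$ be the $K3^{[n]}$-lattice ($n\ge2$), $\alpha\in\Lambda$ primitive isotropic, $Q_\alpha:=\alpha^\perp/\mathbb{Z}\alpha$, and let $Q_\alpha$ act on $\Omega_{\alpha^\perp}$ by $[z]\cdot\mathbb{C}x:=\mathbb{C}(x+(x,z)\alpha)$ for $x\in\alpha^\perp\otimes\mathbb{C}$ (denote the image group of this action by $g(Q_\alpha)$). For $\underline{\ell}\in\Omega_{Q_\alpha}$: (1) $g(Q_\alpha)$ has a dense orbit in the fiber $q^{-1}(\underline{\ell})$ if and only if $\underline{\ell}$ is non-special; (2) if $g(Q_\alpha)$ has a dense orbit in $q^{-1}(\underline{\ell})$, then every $g(Q_\alpha)$-orbit in $q^{-1}(\underline{\ell})$ is dense.
   Context: $\Omega_{\alpha^\perp}:=\{\ell\in\mathbb{P}(\Lambda\otimes\mathbb{C}):(\ell,\ell)=0,(\ell,\bar\ell)>0,(\ell,\alpha)=0\}$, $\Omega_{Q_\alpha}:=\{\ell\in\mathbb{P}(Q_\alpha\otimes\mathbb{C}):(\ell,\ell)=0,(\ell,\bar\ell)>0\}$, and $q:\Omega_{\alpha^\perp}\to\Omega_{Q_\alpha}$ sends a line to its image modulo $\mathbb{C}\alpha$; the fiber over $\underline{\ell}$ is $\mathbb{P}(\mathbb{C}\alpha+\mathbb{C}t)\setminus\{[\alpha]\}$ for any lift $t$. A period $\underline{\ell}\in\Omega_{Q_\alpha}$ is special if $(\underline{\ell}\oplus\bar{\underline{\ell}})\cap Q_\alpha\neq0$ (equivalently, the corresponding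 $K3$ period in $\Lambda_{k3}\cong$ $K3$ lattice, via $Q_\alpha\cong\bar v^\perp\subset\Lambda_{k3}$, is special), and non-special otherwise. The action is well defined in $Q_\alpha$ since $(x,\alpha)=0$. *)

From HB Require Import structures.
From mathcomp Require Import all_boot all_order all_algebra.
From mathcomp Require Import reals.
From mathcomp Require Export complex.
Set Implicit Arguments. Unset Strict Implicit. Unset Printing Implicit Defensive.
Import Order.TTheory GRing.Theory Num.Theory.
Local Open Scope ring_scope.

(* The K3^[n] lattice  Lambda = U^3 (+) E8(-1)^2 (+) <2-2n>,  realised as     *)
(* Z^23 (row vectors 'rV[int]_23) with the following Gram matrix.            *)
(* Coordinates: 0..5 the three hyperbolic planes U, 6..13 and 14..21 the two *)
(* copies of E8(-1), 22 the generator of <2-2n>.                             *)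

(* Cartan matrix of E8: chain 0-1-2-3-4-5-6 and node 7 attached to node 4   *)
Definition e8_adj (i j : nat) : bool :=
  [|| (j == i.+1) && (j < 7) , (i == j.+1) && (i < 7) , ((i == 4) && (j == 7)) | ((i == 7) && (j == 4))]%N.

Definition e8_cartan (i j : nat) : int :=
  if i == j then 2 else if e8_adj i j then -1 else 0.

Definition k3n_gram_nat (n i j : nat) : int :=
  if (i < 6)%N then
    (if (j < 6)%N then (if (i./2 == j./2) && (i != j) then 1 else 0) else 0)
  else if (i < 22)%N then
    (if (6 <= j < 22)%N && ((i - 6) %/ 8 == (j - 6) %/ 8)%N
     then - e8_cartan ((i - 6) %% 8) ((j - 6) %% 8) else 0)
  else (if j == 22 then 2%:Z - 2%:Z * n%:Z else 0).

Definition k3n_gram (n : nat) : 'M[int]_23 :=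
  \matrix_(i < 23, j < 23) k3n_gram_nat n i j.

Notation Lam := 'rV[int]_23.

Definition bil (n : nat) (x y : Lam) : int := (x *m k3n_gram n *m y^T) 0 0.

Definition primitive (a : Lam) : Prop :=
  a != 0 /\ forall (k : int) (b : Lam), a = k *: b -> `|k| = 1.

Section Complexified.
Variable R : realType.
Local Notation C := R[i].

Definition toC (x : Lam) : 'rV[C]_23 := map_mx (fun k : int => k%:~R) x.
Definition bilC (n : nat) (x y : 'rV[C]_23) : C :=
  (x *m map_mx (fun k : int => k%:~R) (k3n_gram n) *m y^T) 0 0.
Definition conjv (x : 'rV[C]_23) : 'rV[C]_23 := map_mx (@conjc R) x.

(* A point of P(Lambda (x) C) is represented by a nonzero vector; all the    *)
(* predicates below are invariant under nonzero rescaling.                  *)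

Definition in_Omega_perp (n : nat) (a : Lam) (x : 'rV[C]_23) : Prop :=
  [/\ x != 0, bilC n x x = 0, 0 < bilC n x (conjv x) & bilC n x (toC a) = 0].

(* t in alpha^perp (x) C is a lift of a period  l_ = [t mod C alpha]  in      *)
(* Omega_{Q_alpha}: the conditions (t,t) = 0 and (t, tbar) > 0 are those of  *)
(* the induced form on Q_alpha (x) C, and they force t notin C alpha.         *)
Definition Q_period_lift (n : nat) (a : Lam) (t : 'rV[C]_23) : Prop :=
  [/\ bilC n t (toC a) = 0, bilC n t t = 0 & 0 < bilC n t (conjv t)].

(* The period l_ (with lift t) is special iff (l_ (+) l_bar) meets Q_alpha   *)
(* nontrivially: some v in alpha^perp, whose class in Q_alpha is nonzero      *)
(* (v notin Z alpha), has image in Q_alpha (x) C lying in C t + C tbar       *)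
(* modulo C alpha.                                                          *)
Definition special (n : nat) (a : Lam) (t : 'rV[C]_23) : Prop :=
  exists (v : Lam) (u w c : C),
    [/\ bil n v a = 0, (forall k : int, v != k *: a) &
        toC v = u *: t + w *: conjv t + c *: toC a].

(* The fiber q^{-1}(l_) = P(C alpha + C t) \ {[alpha]}. *)
Definition in_fiber (a : Lam) (t x : 'rV[C]_23) : Prop :=
  exists u c : C, u != 0 /\ x = u *: t + c *: toC a.

Definition gact (n : nat) (a z : Lam) (x : 'rV[C]_23) : 'rV[C]_23 :=
  x + bilC n x (toC z) *: toC a.

(* The orbit of the point [x] under g(Q_alpha) is dense in the fiber         *)
(* q^{-1}(l_), for the (quotient = classical) topology of P^22(C): every     *)
(* point [y] of the fiber, with any representative y, and every eps > 0,     *)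
(* there is an orbit point [g_z x] with a representative lam * g_z x within  *)
(* eps of y (coordinatewise).  Since C^23 \ 0 -> P^22 is open, the images of *)
(* such balls form a neighbourhood basis of [y].                            *)
Definition orbit_dense_in_fiber (n : nat) (a : Lam) (t x : 'rV[C]_23) : Prop :=
  forall y : 'rV[C]_23, in_fiber a t y ->
  forall eps : C, 0 < eps ->
  exists (z : Lam) (lam : C),
    bil n z a = 0 /\ lam != 0 /\
    forall i : 'I_23, `| (lam *: gact n a z x) 0 i - y 0 i | < eps.

End Complexified.

From HB Require Import structures.
From mathcomp Require Import all_boot all_order all_algebra.
From mathcomp Require Import boolp classical_sets reals complex ring lra zify.
Set Implicit Arguments. Unset Strict Implicit. Unset Printing Implicit Defensive.
Import Order.TTheory GRing.Theory Num.Theory Normc.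
Local Open Scope ring_scope.

(* A point of the fiber q^-1(l) is [u t + c alpha] with u <> 0, and [z] in
   Q_alpha moves it to [u t + (c + u (t, z)) alpha].  Up to the scaling by u,
   every orbit in the fiber is thus a translate of the additive subgroup
   Gamma = {(t, z) | z in alpha^perp} of C, so one orbit is dense iff Gamma is
   dense iff all orbits are.
   By Kronecker's theorem Gamma is dense in C = R^2 unless a nonzero real
   linear form maps it into a discrete group m Z.  A real linear form is
   s |-> u s + w conj(s), i.e. on Gamma the pairing with y = u t + w tbar.  If
   it is integral on alpha^perp, clearing the denominators of the inverse Gram
   matrix turns a multiple of y into a lattice vector v in
   C t + C tbar + C alpha, which is not a multiple of alpha since
   (t, tbar) > 0: the period is special.  Conversely a special v makes
   z |-> (v, z) an integral real linear form on Gamma, which rules out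
   density. *)

(** * The Gram matrix of the K3^[n] lattice *)

Lemma all_iota2P (P : nat -> nat -> bool) (k m : nat) :
  all (fun i => all (P i) (iota 0 m)) (iota 0 k) ->
  forall i j, (i < k)%N -> (j < m)%N -> P i j.
Proof.
move=> /allP hP i j hi hj.
have := hP i; rewrite mem_iota hi => /(_ isT) /allP /(_ j).
by rewrite mem_iota hj; apply.
Qed.

Lemma k3n_gram_nat_n0 (n i j : nat) : (i < 22)%N || (j != 22) ->
  k3n_gram_nat n i j = k3n_gram_nat 0 i j.
Proof.
rewrite /k3n_gram_nat; case: ltnP => // _; case: ltnP => // _.
by case: eqP.
Qed.

Lemma k3n_gram_nat_sym (n i j : nat) : (i < 23)%N -> (j < 23)%N ->
  k3n_gram_nat n i j = k3n_gram_nat n j i.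
Proof.
move=> hi hj; have [[-> ->] | neq] := pselect (i = 22%N /\ j = 22%N) => //.
rewrite !k3n_gram_nat_n0; try by apply/orP; lia.
by apply/eqP; move: i j hi hj {neq}; apply: all_iota2P; vm_compute.
Qed.

Lemma k3n_gram_sym (n : nat) : (k3n_gram n)^T = k3n_gram n.
Proof. by apply/matrixP => i j; rewrite !mxE k3n_gram_nat_sym. Qed.

(* U^3 (+) E8(-1)^2 is unimodular, with inverse U^3 (+) (-E8^-1)^2 where E8^-1
   is the inverse of the Cartan matrix of [e8_cartan]. *)
Definition e8_cartan_inv (i j : nat) : int :=
  nth 0 (nth [::]
    [:: [:: 2; 3; 4; 5; 6; 4; 2; 3];
        [:: 3; 6; 8; 10; 12; 8; 4; 6];
        [:: 4; 8; 12; 15; 18; 12; 6; 9];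
        [:: 5; 10; 15; 20; 24; 16; 8; 12];
        [:: 6; 12; 18; 24; 30; 20; 10; 15];
        [:: 4; 8; 12; 16; 20; 14; 7; 10];
        [:: 2; 4; 6; 8; 10; 7; 4; 5];
        [:: 3; 6; 9; 12; 15; 10; 5; 8]] i) j.

Definition k3n_gram_inv_nat (i j : nat) : int :=
  if (i < 6)%N then
    (if (j < 6)%N then (if (i./2 == j./2) && (i != j) then 1 else 0) else 0)
  else if (i < 22)%N then
    (if (6 <= j < 22)%N && ((i - 6) %/ 8 == (j - 6) %/ 8)%N
     then - e8_cartan_inv ((i - 6) %% 8) ((j - 6) %% 8) else 0)
  else (j == 22)%:R.

Lemma k3n_gram_mul_inv_nat (i j : nat) : (i < 22)%N -> (j < 23)%N ->
  \sum_(0 <= l < 23) k3n_gram_nat 0 i l * k3n_gram_inv_nat l j = (i == j)%:R.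
Proof.
move=> hi hj; apply/eqP; move: i j hi hj; apply: all_iota2P.
by rewrite unlock; vm_compute.
Qed.

Definition k3n_gram_inv : 'M[int]_23 := \matrix_(i, j) k3n_gram_inv_nat i j.

Lemma k3n_gram_mul_inv (n : nat) :
  k3n_gram n *m k3n_gram_inv =
  diag_mx (\row_j (if j == ord_max then 2 - 2 * n%:Z else 1)).
Proof.
apply/matrixP => i j; rewrite !mxE.
under eq_bigr => l _ do rewrite !mxE.
rewrite -(big_mkord xpredT (fun l => k3n_gram_nat n i l * k3n_gram_inv_nat l j)).
have [hi | hi] := ltnP i 22.
  transitivity (\sum_(0 <= l < 23) k3n_gram_nat 0 i l * k3n_gram_inv_nat l j).
    by apply: eq_big_nat => l _; rewrite k3n_gram_nat_n0 ?hi.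
  by rewrite k3n_gram_mul_inv_nat // ifN // -val_eqE /= neq_ltn hi.
have -> : i = ord_max by apply/val_inj/eqP; rewrite eqn_leq hi -ltnS ltn_ord.
rewrite eqxx big_nat_recr //= big1_seq ?add0r => [|l]; last first.
  rewrite mem_index_iota => /andP[_ /andP[_ hl]].
  by rewrite /k3n_gram_nat /= ifN ?mul0r // neq_ltn hl.
rewrite /k3n_gram_inv_nat /= eq_sym.
change (ord_max == j) with (22 == nat_of_ord j)%N.
by case: (_ == _); rewrite ?mulr1 ?mulr0.
Qed.

Lemma det_k3n_gram_neq0 (n : nat) : (2 <= n)%N -> \det (k3n_gram n) != 0.
Proof.
move=> hn; have := congr1 determinant (k3n_gram_mul_inv n).
rewrite det_mulmx det_diag big_ord_recr /= big1 => [|i _]; last first.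
  by rewrite !mxE ifN // -val_eqE /= neq_ltn ltn_ord.
rewrite mxE eqxx mul1r => hdet.
have : 2 - 2 * n%:Z != 0 by rewrite subr_eq0; apply/eqP; lia.
by rewrite -hdet mulf_eq0 negb_or => /andP[].
Qed.

Lemma mul_k3n_gram_neq0 (n : nat) (a : Lam) : (2 <= n)%N -> a != 0 -> a *m k3n_gram n != 0.
Proof.
move=> hn a_neq0; apply: contraNneq a_neq0 => aG0; apply/eqP/matrixP => i j.
have := congr1 (fun M => (M *m \adj (k3n_gram n)) i j) aG0.
rewrite -mulmxA mul_mx_adj mul_mx_scalar mul0mx !mxE => /eqP.
by rewrite mulf_eq0 (negbTE (det_k3n_gram_neq0 hn)) => /eqP.
Qed.

Lemma mx_form_sym (T : comPzRingType) (m : nat) (G : 'M[T]_m) (x y : 'rV[T]_m) :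
  G^T = G -> (x *m G *m y^T) 0 0 = (y *m G *m x^T) 0 0.
Proof.
move=> symG; have tr00 (M : 'M[T]_1) : M 0 0 = M^T 0 0 by rewrite mxE.
by rewrite tr00 !trmx_mul trmxK symG mulmxA.
Qed.

Section IntegralForm.
Variable n : nat.
Implicit Types x y w : Lam.

Lemma bil_sym x y : bil n x y = bil n y x.
Proof. exact/mx_form_sym/k3n_gram_sym. Qed.

Lemma bilBl x y w : bil n (x - y) w = bil n x w - bil n y w.
Proof. by rewrite /bil !mulmxBl !mxE. Qed.

Lemma bil0l w : bil n 0 w = 0.
Proof. by rewrite /bil !mul0mx mxE. Qed.

End IntegralForm.

Lemma primitive_neq0_coord (a : Lam) : primitive a -> exists i, a 0 i != 0.
Proof.
case=> a_neq0 _; apply/existsP; apply: contraR a_neq0 => /existsPn a0.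
by apply/eqP/rowP => j; rewrite [RHS]mxE; apply/eqP/negPn/a0.
Qed.

Lemma primitive_collinear (a v : Lam) (i : 'I_23) : primitive a -> a 0 i != 0 ->
  (forall j, a 0 i * v 0 j = v 0 i * a 0 j) -> exists k : int, v = k *: a.
Proof.
move=> [_ prim_a] ai_neq0 hrel.
have ai_neq0' : ((a 0 i)%:~R : rat) != 0 by rewrite intr_eq0.
set c : rat := (v 0 i)%:~R / (a 0 i)%:~R.
have hc j : ((v 0 j)%:~R : rat) = c * (a 0 j)%:~R.
  have := congr1 (fun k : int => (k%:~R : rat)) (hrel j); rewrite /= !intrM => e.
  by apply: (mulfI ai_neq0'); rewrite e /c; field.
have hPQ j : denq c * v 0 j = numq c * a 0 j.
  by apply/eqP; rewrite -(eqr_int rat) !intrM hc numqE mulrCA mulrA.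
have [[x y] /= bezout] := coprimezP _ _ (coprime_num_den c).
have a_den : a = denq c *: (x *: v + y *: a).
  apply/matrixP => k j; rewrite !ord1 !mxE mulrDr mulrCA hPQ -[LHS]mulr1 -bezout.
  ring.
have den1 : denq c = 1 by have := prim_a _ _ a_den; rewrite gtr0_norm // denq_gt0.
by exists (numq c); apply/matrixP => k j; rewrite !ord1 !mxE -hPQ den1 mul1r.
Qed.

Local Open Scope complex_scope.
Local Notation Re := complex.Re.
Local Notation Im := complex.Im.

Section ComplexNumbers.
Variable R : rcfType.
Local Notation C := R[i].
Implicit Types (z w A B P : C) (r : R).

Lemma normcE z : `|z| = (normc z)%:C.
Proof. by rewrite normc_def; case: z. Qed.

Lemma normc_ge0 z : 0 <= normc z.
Proof. by case: z => ? ?; apply: sqrtr_ge0. Qed.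

Lemma normc_eq0 z : (normc z == 0) = (z == 0).
Proof. by rewrite -(inj_eq (@complexI R)) -normcE normr_eq0. Qed.

Lemma normc_gt0 z : (0 < normc z) = (z != 0).
Proof. by rewrite lt_def normc_eq0 normc_ge0 andbT. Qed.

Lemma normcB z w : normc (z - w) = normc (w - z).
Proof. by rewrite -normcN opprB. Qed.

Lemma normc_real r : normc r%:C = `|r|.
Proof. by rewrite /normc /= expr0n /= addr0 sqrtr_sqr. Qed.

Lemma normc_int (k : int) : normc k%:~R = `|k%:~R : R|.
Proof. by rewrite -(rmorph_int (real_complex R)) normc_real. Qed.

Lemma normc_conj z : normc (z^*)%C = normc z.
Proof. by case: z => a b; rewrite /normc /= sqrrN. Qed.

Lemma normc_le_ReIm z : normc z <= `|Re z| + `|Im z|.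
Proof.
rewrite {1}[z]complexE; apply: le_trans (le_normcD _ _) _.
by rewrite normcM !normc_real /normc /= expr0n expr1n /= add0r sqrtr1 mul1r.
Qed.

Lemma ReB z w : Re (z - w) = Re z - Re w. Proof. by case: z; case: w. Qed.
Lemma ImB z w : Im (z - w) = Im z - Im w. Proof. by case: z; case: w. Qed.

Lemma Im_realM r z : Im (r%:C * z) = r * Im z.
Proof. by case: z => a b /=; rewrite !mul0r addr0. Qed.

Lemma conjc_realM r z : ((r%:C * z)^*)%C = r%:C * (z^*)%C.
Proof.
by case: z => a b; apply/eqP; rewrite eq_complex /= !mul0r !subr0 !addr0 mulrN !eqxx.
Qed.

Lemma intC (k : int) : (k%:~R : R[i]) = (k%:~R : R)%:C.
Proof. by rewrite (rmorph_int (real_complex R)). Qed.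

Lemma Im_intM (k : int) z : Im (k%:~R * z) = k%:~R * Im z.
Proof. by rewrite intC Im_realM. Qed.

Lemma Im_conjM_self z : Im ((z^*)%C * z) = 0.
Proof. by case: z => a b /=; ring. Qed.

Lemma Im_div z w : Im (z / w) = Im ((w^*)%C * z) / normc w ^+ 2.
Proof.
by rewrite invc_norm normcE -rmorphXn -fmorphV mulrCA Im_realM mulrC [z * _]mulrC.
Qed.

Lemma gtc0_real (eps : C) : 0 < eps -> exists2 E : R, 0 < E & eps = E%:C.
Proof. by case: eps => x y; rewrite ltcE /= => /andP[/eqP -> x_gt0]; exists x. Qed.

Lemma ltc_normc z (r : R) : (`|z| < r%:C) = (normc z < r).
Proof. by rewrite normcE ltcR. Qed.

Lemma cramer2_normc A B (x1 y1 x2 y2 : C) (ep : R) :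
  normc (A * x1 + B * y1) < ep -> normc (A * x2 + B * y2) < ep ->
  normc A * normc (x1 * y2 - x2 * y1) <= ep * (normc y1 + normc y2).
Proof.
move=> close1 close2; rewrite -normcM.
have -> : A * (x1 * y2 - x2 * y1) = (A * x1 + B * y1) * y2 - (A * x2 + B * y2) * y1 by ring.
apply: le_trans (le_normcD _ _) _; rewrite normcN !normcM mulrDr addrC.
by rewrite lerD // ler_wpM2r ?normc_ge0 // ltW.
Qed.

Lemma normc_div_sub_le A B P (d : R) : normc (A - 1) <= d -> d <= 2^-1 ->
  normc (B - P) <= d -> normc (B / A - P) <= 2 * d * (1 + normc P).
Proof.
move=> A_close d_small B_close.
have A_ge : 2^-1 <= normc A.
  have : normc 1 <= normc (1 - A) + normc A by apply: le_trans (le_normcD _ _); rewrite subrK.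
  by rewrite normc1 normcB; lra.
have A_neq0 : A != 0 by rewrite -normc_gt0; lra.
have -> : B / A - P = ((B - P) - P * (A - 1)) / A by field.
rewrite normcM normcV ler_pdivrMr; last lra.
apply: le_trans (le_normcD _ _) _; rewrite normcN normcM.
have P_ge0 := normc_ge0 P; have d_ge0 : 0 <= d by apply: le_trans A_close; apply: normc_ge0.
have : normc P * normc (A - 1) <= normc P * d by apply: ler_wpM2l.
have : d * (1 + normc P) <= 2 * d * (1 + normc P) * normc A.
  have : 0 <= d * (1 + normc P) by apply: mulr_ge0; lra.
  nra.
lra.
Qed.

Lemma ratio_close_of_rows (m : nat) (x y : 'rV[C]_m) (i j : 'I_m) (A B P : C) (d ep : R) :
  let D := x 0 i * y 0 j - x 0 j * y 0 i in
  D != 0 -> d <= 2^-1 ->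
  ep * (normc (x 0 i) + normc (x 0 j) + normc (y 0 i) + normc (y 0 j)) <= d * normc D ->
  (forall k, normc ((A - 1) * x 0 k + (B - P) * y 0 k) < ep) ->
  normc (B / A - P) <= 2 * d * (1 + normc P).
Proof.
move=> D D_neq0 d_small ep_le close; have D_gt0 : 0 < normc D by rewrite normc_gt0.
have ep_ge0 : 0 <= ep by apply: le_trans (ltW (close i)); apply: normc_ge0.
move: (normc_ge0 (x 0 i)) (normc_ge0 (x 0 j)) (normc_ge0 (y 0 i)) (normc_ge0 (y 0 j)).
move=> xi_ge0 xj_ge0 yi_ge0 yj_ge0.
apply: normc_div_sub_le d_small _.
  rewrite -(ler_pM2r D_gt0); apply: le_trans (cramer2_normc (close i) (close j)) _.
  by apply: le_trans ep_le; apply: ler_wpM2l => //; lra.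
have close' k : normc ((B - P) * y 0 k + (A - 1) * x 0 k) < ep by rewrite addrC.
have := cramer2_normc (close' i) (close' j).
rewrite (_ : y 0 i * x 0 j - y 0 j * x 0 i = - D) ?normcN => [bound|]; last by rewrite /D; ring.
rewrite -(ler_pM2r D_gt0); apply: le_trans bound _.
by apply: le_trans ep_le; apply: ler_wpM2l => //; lra.
Qed.

Lemma Im_mul_real_linear (b s : C) :
  (Im (b * s))%:C = - (b * 'i%C) / 2 * s + ((b^*)%C * 'i%C) / 2 * (s^*)%C.
Proof. by rewrite ImJ_sub rmorphM /=; field. Qed.

End ComplexNumbers.

Section ZmultipleApprox.
Variable R : archiRcfType.
Local Notation C := R[i].

Lemma approx_zmultiple (g s : C) : g != 0 ->
  exists k : int, normc (s - k%:~R * g) <= normc g / 2 + `|Im ((g^*)%C * s)| / normc g.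
Proof.
move=> g_neq0; have ng_gt0 : 0 < normc g by rewrite normc_gt0.
set q := s / g; set k := Num.floor (Re q + 2^-1); exists k.
have -> : s - k%:~R * g = g * (q - k%:~R) by rewrite /q; field.
have Re_close : `|Re q - k%:~R| <= 2^-1.
  have := floor_le (Re q + 2^-1); have := floorD1_gt (Re q + 2^-1).
  by rewrite -/k intrD ler_norml => ? ?; apply/andP; split; lra.
have Im_q : `|Im q| * normc g = `|Im ((g^*)%C * s)| / normc g.
  rewrite /q Im_div normrM normrV ?unitfE ?expf_neq0 ?lt0r_neq0 //.
  rewrite [`|normc g ^+ 2|]ger0_norm ?exprn_ge0 ?normc_ge0 //.
  by field; rewrite lt0r_neq0.
rewrite normcM; apply: le_trans (ler_wpM2l (normc_ge0 g) (normc_le_ReIm _)) _.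
rewrite ReB ImB intC /= subr0 mulrDr [_ * `|Im q|]mulrC Im_q lerD2r.
by apply: ler_wpM2l => //; apply: normc_ge0.
Qed.

End ZmultipleApprox.

(** * Kronecker's theorem for additive subgroups of C *)

Lemma subgroup_mulz (V : zmodType) (H : V -> Prop) :
  H 0 -> (forall x y, H x -> H y -> H (x - y)) -> forall (k : int) x, H x -> H (x *~ k).
Proof.
move=> H0 HB; have HN x : H x -> H (- x) by move=> Hx; rewrite -sub0r; apply: HB.
have HnX x m : H x -> H (x *+ m).
  move=> Hx; elim: m => [|m IHm]; first by rewrite mulr0n.
  by rewrite mulrS -[x *+ m]opprK; apply/HB/HN.
by move=> [m|m] x Hx; rewrite ?NegzE ?mulrNz; [apply: HnX | apply/HN/HnX].
Qed.

Lemma real_subgroup_dense_or_discrete (R : realType) (H : R -> Prop) :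
  H 0 -> (forall x y, H x -> H y -> H (x - y)) ->
  (forall e, 0 < e -> exists h, [/\ H h, 0 < h & h < e]) \/
  (exists2 m, 0 < m & forall h, H h -> exists k : int, h = k%:~R * m).
Proof.
move=> H0 HB; have HZ k x : H x -> H (k%:~R * x) by rewrite mulrzl; apply: subgroup_mulz.
case: (pselect (exists2 h, H h & 0 < h)) => [[h0 Hh0 h0_gt0] | no_pos]; last first.
  right; exists 1 => // h Hh; exists 0; rewrite mul0r.
  have [h_lt0|h_gt0|//] := ltrgtP h 0; exfalso; apply: no_pos.
    by exists (0 - h); [exact: HB | lra].
  by exists h.
pose S x := H x /\ 0 < x.
have S_ne : nonempty S by exists h0.
have S_lb : has_lbound S by exists 0 => x [_ /ltW].
have inf_le x : S x -> inf S <= x by move=> Sx; apply: ge_inf.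
have := lb_le_inf S_ne (fun x (Sx : S x) => ltW Sx.2 : 0 <= x).
rewrite le_eqVlt => /orP[/eqP inf0 | inf_gt0].
  left => e e_gt0; have [y [Hy y_gt0] y_lt] : exists2 y, S y & y < e.
    by apply: inf_lt => //; rewrite -inf0.
  by exists y.
right; exists (inf S) => //; set m := inf S in inf_gt0 inf_le *.
(* If m were not in H, two elements of S in (m, 2 m) would differ by an element
   of S below m. *)
have Hm : H m.
  apply: contrapT => nHm.
  have [h1 Sh1 h1_lt] : exists2 y, S y & y < m + m by apply: inf_lt => //; lra.
  have m_lt_h1 : m < h1.
    rewrite lt_def inf_le // andbT; apply/eqP => h1m.
    by apply: nHm; rewrite -h1m; case: Sh1.
  have [h2 Sh2 h2_lt] : exists2 y, S y & y < h1 by apply: inf_lt.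
  have S_diff : S (h1 - h2) by split; [apply: HB; [exact: Sh1.1 | exact: Sh2.1] | lra].
  by have := inf_le _ S_diff; have := inf_le _ Sh2; lra.
move=> h Hh; set k := Num.floor (h / m); exists k.
have := floor_le (h / m); have := floorD1_gt (h / m).
rewrite -/k intrD ler_pdivlMr // ltr_pdivrMr // mulrDl mul1r => h_lt h_ge.
have Hr : H (h - k%:~R * m) by apply/HB/HZ.
have [r_gt0 | r_le0] := ltP 0 (h - k%:~R * m); first by have := inf_le _ (conj Hr r_gt0); lra.
by apply/eqP; rewrite -subr_eq0 eq_le r_le0 subr_ge0.
Qed.

Section Kronecker.
Variables (R : realType) (G : R[i] -> Prop).
Hypotheses (G0 : G 0) (GB : forall x y, G x -> G y -> G (x - y)).
Hypothesis Im_mul_not_discrete : forall (b : R[i]) (m : R), b != 0 -> 0 < m ->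
  ~ (forall g, G g -> exists k : int, Im (b * g) = k%:~R * m).

Let GZ (k : int) x : G x -> G (k%:~R * x).
Proof. by rewrite mulrzl; apply: subgroup_mulz. Qed.

Lemma Im_mul_dense (b : R[i]) : b != 0 ->
  forall r e, 0 < e -> exists g, G g /\ `|Im (b * g) - r| < e.
Proof.
move=> b_neq0 r e e_gt0.
pose H h := exists2 g, G g & h = Im (b * g).
have H0 : H 0 by exists 0; rewrite ?mulr0.
have HB x y : H x -> H y -> H (x - y).
  by move=> [g Gg ->] [g' Gg' ->]; exists (g - g'); [apply: GB | rewrite mulrBr ImB].
have [small | [m m_gt0 discrete]] := real_subgroup_dense_or_discrete H0 HB; last first.
  by case: (Im_mul_not_discrete b_neq0 m_gt0) => g Gg; apply: discrete; exists g.
have [_ [[g0 Gg0 ->] h_gt0 h_lt]] := small e e_gt0.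
set h := Im (b * g0) in h_gt0 h_lt *; set k := Num.floor (r / h).
exists (k%:~R * g0); split; first exact: GZ.
rewrite mulrCA Im_intM -/h.
have := floor_le (r / h); have := floorD1_gt (r / h).
rewrite -/k intrD ler_pdivlMr // ltr_pdivrMr // mulrDl mul1r => ? ?.
by rewrite ltr_norml; apply/andP; split; lra.
Qed.

Lemma subgroup_neq0 : exists g, G g /\ g != 0.
Proof.
apply: contrapT => G_trivial; apply: (@Im_mul_not_discrete 1 1) => // [|g Gg].
  by rewrite oner_eq0.
exists 0; rewrite mul0r mul1r.
have [-> //|g_neq0] := eqVneq g 0; by case: G_trivial; exists g.
Qed.

Lemma subgroup_small e : 0 < e -> exists g, [/\ G g, g != 0 & normc g < e].
Proof.
(* Otherwise some nonzero g1 has almost minimal modulus, and reducing modulo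
   Z g1 an element h with Im (g1^* h) tiny but positive yields a nonzero
   element of modulus below the infimum. *)
move=> e_gt0; apply: contrapT => no_small.
have e_le g : G g -> g != 0 -> e <= normc g.
  by move=> Gg g_neq0; rewrite leNgt; apply/negP => ge; apply: no_small; exists g.
pose T r := exists g, [/\ G g, g != 0 & r = normc g].
have [g0 [Gg0 g0_neq0]] := subgroup_neq0.
have T_ne : nonempty T by exists (normc g0), g0.
have T_lb : has_lbound T by exists 0 => _ [g [_ _ ->]]; apply: normc_ge0.
have e_le_mu : e <= inf T by apply: lb_le_inf => // _ [g [Gg g_neq0 ->]]; apply: e_le.
set mu := inf T in e_le_mu; have mu_gt0 : 0 < mu by apply: lt_le_trans e_le_mu.
have [_ [g1 [Gg1 g1_neq0 ->]] g1_lt] : exists2 r, T r & r < mu + mu / 2.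
  by apply: inf_lt => //; lra.
have mu_le_g1 : mu <= normc g1 by apply: ge_inf => //; exists g1.
have g1_gt0 : 0 < normc g1 by rewrite normc_gt0.
set eta := mu * normc g1 / 4.
have eta_gt0 : 0 < eta by rewrite /eta; apply: divr_gt0 => //; apply: mulr_gt0.
have eta2_gt0 : 0 < eta / 2 by lra.
have g1c_neq0 : (g1^*)%C != 0 by rewrite conjc_eq0.
have [h [Gh h_close]] := Im_mul_dense g1c_neq0 (eta / 2) eta2_gt0.
set bb := Im ((g1^*)%C * h) in h_close.
have [bb_gt0 bb_lt] : 0 < bb /\ bb < eta by move: h_close; rewrite ltr_norml => /andP[]; lra.
have [k hk] := approx_zmultiple h g1_neq0.
rewrite -/bb (gtr0_norm bb_gt0) in hk.
have bb_small : bb / normc g1 < mu / 4 by rewrite ltr_pdivrMr // mulrAC.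
have Gh' : G (h - k%:~R * g1) by apply/GB/GZ.
have h'_neq0 : h - k%:~R * g1 != 0.
  apply: contraTneq bb_gt0 => h'0.
  have : Im ((g1^*)%C * (h - k%:~R * g1)) = bb.
    by rewrite mulrBr ImB mulrCA Im_intM Im_conjM_self mulr0 subr0.
  by rewrite h'0 mulr0 => <-; rewrite ltxx.
have := ge_inf T_lb (ex_intro _ _ (And3 Gh' h'_neq0 erefl)); rewrite -/mu.
lra.
Qed.

Theorem subgroup_dense p e : 0 < e -> exists2 g, G g & normc (g - p) < e.
Proof.
move=> e_gt0; have e2_gt0 : 0 < e / 2 by lra.
have [g1 [Gg1 g1_neq0 g1_lt]] := subgroup_small e2_gt0.
have g1_gt0 : 0 < normc g1 by rewrite normc_gt0.
have g1c_neq0 : (g1^*)%C != 0 by rewrite conjc_eq0.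
have [h [Gh h_close]] :
    exists g, G g /\ `|Im ((g1^*)%C * g) - Im ((g1^*)%C * p)| < e * normc g1 / 2.
  by apply: Im_mul_dense => //; apply: divr_gt0 => //; apply: mulr_gt0.
have [k hk] := approx_zmultiple (h - p) g1_neq0.
exists (h - k%:~R * g1); first by apply/GB/GZ.
rewrite [_ - p]addrAC; apply: le_lt_trans hk _; rewrite mulrBr ImB.
have : `|Im ((g1^*)%C * h) - Im ((g1^*)%C * p)| / normc g1 < e / 2.
  by rewrite ltr_pdivrMr // mulrAC.
lra.
Qed.

End Kronecker.

Section RealLinearForms.
Variable R : realType.
Local Notation C := R[i].
Implicit Types (u w s : C).

Lemma real_linear_neq0 u w : (u != 0) || (w != 0) -> exists s, u * s + w * (s^*)%C != 0.
Proof.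
move=> uw_neq0; apply: contrapT => F0.
have F_eq0 s : u * s + w * (s^*)%C = 0 by apply: contrapT => Fs; apply: F0; exists s; apply/eqP.
pose i : C := Complex 0 1.
have i_neq0 : i != 0 by rewrite eq_complex /= oner_eq0 andbF.
have i_conj : (i^*)%C = - i by apply/eqP; rewrite eq_complex /= oppr0 !eqxx.
have := F_eq0 i; rewrite i_conj mulrN -mulrBl => /eqP.
rewrite mulf_eq0 (negbTE i_neq0) orbF subr_eq0 => /eqP u_eq_w.
have := F_eq0 1; rewrite conjc1 !mulr1 u_eq_w -mulr2n => /eqP.
by rewrite mulrn_eq0 /= => w_eq0; move: uw_neq0; rewrite u_eq_w w_eq0.
Qed.

Lemma integral_form_not_dense (G : C -> Prop) u w : (u != 0) || (w != 0) ->
  (forall s, G s -> exists k : int, u * s + w * (s^*)%C = k%:~R) ->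
  ~ (forall p e, 0 < e -> exists2 s, G s & normc (s - p) < e).
Proof.
(* Rescale s0 so that |F s1| = 1/2: F maps the elements of G near s1 to
   integers within 1/4 of F s1, which do not exist. *)
move=> uw_neq0 F_int G_dense; pose F s := u * s + w * (s^*)%C.
have F_scale r s : F (r%:C * s) = r%:C * F s.
  by rewrite /F conjc_realM; ring.
have F_sub s s' : F s - F s' = F (s - s') by rewrite /F rmorphB; ring.
have F_le s : normc (F s) <= (normc u + normc w) * normc s.
  by apply: le_trans (le_normcD _ _) _; rewrite !normcM normc_conj mulrDl.
have [s0 Fs0_neq0] := real_linear_neq0 uw_neq0.
have Fs0_gt0 : 0 < normc (F s0) by rewrite normc_gt0.
set s1 := ((2 * normc (F s0))^-1)%:C * s0.
have Fs1 : normc (F s1) = 2^-1.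
  rewrite F_scale normcM normc_real ger0_norm; last by rewrite invr_ge0 mulr_ge0 ?normc_ge0.
  by field; rewrite lt0r_neq0.
set L := normc u + normc w + 1.
have L_gt0 : 0 < L by rewrite /L; have := normc_ge0 u; have := normc_ge0 w; lra.
have [s Gs s_close] := G_dense s1 (4 * L)^-1 ltac:(rewrite invr_gt0; lra).
have [k Fk] := F_int s Gs.
have k_close : normc (k%:~R - F s1) < 4^-1.
  rewrite -Fk F_sub; apply: le_lt_trans (F_le _) _.
  move: s_close; rewrite -div1r ltr_pdivlMr; last lra.
  by have := normc_ge0 u; have := normc_ge0 w; have := normc_ge0 (s - s1); rewrite /L; nra.
have k_le : normc (k%:~R : C) <= normc (k%:~R - F s1) + normc (F s1).
  by apply: le_trans (le_normcD _ _); rewrite subrK.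
rewrite Fs1 normc_int in k_le; have [k0 | k_neq0] := eqVneq k 0.
  by move: k_close; rewrite k0 sub0r normcN Fs1; lra.
have : 1 <= `|k%:~R : R| by rewrite -intr_norm ler1z -gtz0_ge1 normr_gt0.
lra.
Qed.

End RealLinearForms.

Section ComplexForm.
Variables (R : realType) (n : nat).
Local Notation C := R[i].
Local Notation intC := (fun k : int => (k%:~R : C)).
Local Notation GC := (map_mx intC (k3n_gram n)).
Implicit Types (x y w : 'rV[C]_23) (c : C) (u v : Lam).

Lemma conjc_int (k : int) : ((k%:~R : C)^*)%C = k%:~R.
Proof. by rewrite -(rmorph_int (real_complex R)) conjc_real. Qed.

Lemma toCB u v : toC R (u - v) = toC R u - toC R v.
Proof. exact: map_mxB. Qed.

Lemma toCZ (k : int) u : toC R (k *: u) = k%:~R *: toC R u.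
Proof. by apply/matrixP => i j; rewrite !mxE intrM. Qed.

Lemma toC0 : toC R 0 = 0.
Proof. exact: map_mx0. Qed.

Lemma toC_mul u (M : 'M[int]_23) : toC R (u *m M) = toC R u *m map_mx intC M.
Proof. exact: map_mxM. Qed.

Lemma conjv_toC u : conjv (toC R u) = toC R u.
Proof. by apply/matrixP => i j; rewrite !mxE conjc_int. Qed.

Lemma conjvZ c x : conjv (c *: x) = (c^*)%C *: conjv x.
Proof. by apply/matrixP => i j; rewrite !mxE rmorphM. Qed.

Lemma bilCDl x y w : bilC n (x + y) w = bilC n x w + bilC n y w.
Proof. by rewrite /bilC !mulmxDl mxE. Qed.

Lemma bilCZl c x w : bilC n (c *: x) w = c * bilC n x w.
Proof. by rewrite /bilC -!scalemxAl mxE. Qed.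

Lemma bilCBl x y w : bilC n (x - y) w = bilC n x w - bilC n y w.
Proof. by rewrite /bilC !mulmxBl !mxE. Qed.

Lemma bilC_sym x y : bilC n x y = bilC n y x.
Proof. by apply: mx_form_sym; rewrite map_trmx k3n_gram_sym. Qed.

Lemma bilCZr c x w : bilC n x (c *: w) = c * bilC n x w.
Proof. by rewrite !(bilC_sym x) bilCZl. Qed.

Lemma bilCBr x y w : bilC n x (y - w) = bilC n x y - bilC n x w.
Proof. by rewrite !(bilC_sym x) bilCBl. Qed.

Lemma bilC0r x : bilC n x 0 = 0.
Proof. by rewrite /bilC trmx0 mulmx0 mxE. Qed.

Lemma bilC_conj x y : bilC n (conjv x) (conjv y) = ((bilC n x y)^*)%C.
Proof.
have GC_conj : map_mx (@conjc R) GC = GC.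
  by apply/matrixP => i j; rewrite !mxE conjc_int.
by rewrite /bilC /conjv -[in LHS]GC_conj map_trmx -!map_mxM mxE.
Qed.

Lemma bil_toC u v : bilC n (toC R u) (toC R v) = (bil n u v)%:~R.
Proof. by rewrite /bilC /bil /toC map_trmx -!map_mxM mxE. Qed.

Lemma k3n_gramC_row_free : (2 <= n)%N -> row_free GC.
Proof.
move=> hn; rewrite row_free_unit unitmxE unitfE det_map_mx intr_eq0.
exact: det_k3n_gram_neq0.
Qed.

End ComplexForm.

Lemma primitive_toC_collinear (R : realType) (a v : Lam) (c : R[i]) :
  primitive a -> toC R v = c *: toC R a -> exists k : int, v = k *: a.
Proof.
move=> prim_a hv; have [i ai_neq0] := primitive_neq0_coord prim_a.
apply: (primitive_collinear prim_a ai_neq0) => j.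
have vC k : ((v 0 k)%:~R : R[i]) = c * (a 0 k)%:~R by move/rowP: hv => /(_ k); rewrite !mxE.
by apply/eqP; rewrite -(eqr_int R[i]) !intrM !vC mulrCA mulrA.
Qed.

Section IntegralPairing.
Variables (R : realType) (n : nat).
Local Notation C := R[i].
Local Notation GC := (map_mx (fun k : int => (k%:~R : C)) (k3n_gram n)).

Lemma integral_on_kernel (om : 'rV[C]_23) (b : Lam) (i0 : 'I_23) :
  (forall z : Lam, (b *m z^T) 0 0 = 0 ->
     exists k : int, (om *m (toC R z)^T) 0 0 = k%:~R) ->
  exists kv : Lam, toC R kv = (b 0 i0)%:~R *: om - om 0 i0 *: toC R b.
Proof.
move=> om_int.
pose zj j : Lam := b 0 i0 *: delta_mx 0 j - b 0 j *: delta_mx 0 i0.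
have om_zj j : (om *m (toC R (zj j))^T) 0 0 = (b 0 i0)%:~R * om 0 j - (b 0 j)%:~R * om 0 i0.
  rewrite toCB !toCZ /toC !map_delta_mx [in LHS]linearB !linearZ /=.
  by rewrite mulmxDr -!scalemxAr mulmxN !trmx_delta -!colE !mxE.
have b_zj j : (b *m (zj j)^T) 0 0 = 0.
  rewrite linearB !linearZ /= mulmxDr -!scalemxAr mulmxN !trmx_delta -!colE !mxE.
  by rewrite mulrN mulrC subrr.
have [f hf] := choice (fun j => om_int _ (b_zj j)).
exists (\row_j f j); apply/matrixP => i j; rewrite !ord1 !mxE -hf om_zj.
by rewrite [om 0 i0 * _]mulrC.
Qed.

Lemma perp_integral_lift (a : Lam) (y : 'rV[C]_23) : (2 <= n)%N -> a != 0 ->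
  (forall z : Lam, bil n z a = 0 -> exists k : int, bilC n y (toC R z) = k%:~R) ->
  exists (v : Lam) (d : int) (c : C), d != 0 /\ toC R v = d%:~R *: y + c *: toC R a.
Proof.
move=> hn a_neq0 y_int; set b := a *m k3n_gram n.
have /existsP[i0 bi0_neq0] : [exists j, b 0 j != 0].
  apply: contraR (mul_k3n_gram_neq0 hn a_neq0) => /existsPn b0.
  by apply/eqP/rowP => j; rewrite [RHS]mxE; apply/eqP/negPn/b0.
have [kv hkv] : exists kv : Lam,
    toC R kv = (b 0 i0)%:~R *: (y *m GC) - (y *m GC) 0 i0 *: toC R b.
  by apply: integral_on_kernel => z bz0; apply: y_int; rewrite bil_sym.
set D := \det (k3n_gram n).
(* The adjugate clears the denominators of the inverse Gram matrix. *)
exists (kv *m \adj (k3n_gram n)), (D * b 0 i0), (- (D%:~R * (y *m GC) 0 i0)).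
split; first by rewrite mulf_neq0 // det_k3n_gram_neq0.
apply: (@row_free_inj _ _ _ _ _ (k3n_gramC_row_free R hn)).
rewrite /= -toC_mul -mulmxA mul_adj_mx mul_mx_scalar toCZ hkv.
by rewrite mulmxDl -!scalemxAl -toC_mul -/b scalerBr !scalerA intrM scaleNr.
Qed.

End IntegralPairing.

(** * The orbits of Q_alpha in a fiber of q *)

Section FiberOrbits.
Variables (R : realType) (n : nat) (a : Lam) (t : 'rV[R[i]]_23).
Local Notation C := R[i].
Local Notation toC := (toC R).
Hypotheses (hn : (2 <= n)%N) (prim_a : primitive a) (iso_a : bil n a a = 0).
Hypothesis (lift_t : Q_period_lift n a t).

Definition tdot (z : Lam) : C := bilC n t (toC z).

Definition tdot_dense : Prop := forall (p : C) (e : R), 0 < e ->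
  exists2 z : Lam, bil n z a = 0 & normc (tdot z - p) < e.

Lemma bilC_a_perp (z : Lam) : bil n z a = 0 -> bilC n (toC a) (toC z) = 0.
Proof. by move=> za0; rewrite bil_toC bil_sym za0. Qed.

Lemma gact_fiber (z : Lam) (u c : C) : bil n z a = 0 ->
  gact n a z (u *: t + c *: toC a) = u *: t + (c + u * tdot z) *: toC a.
Proof.
move=> za0; rewrite /gact bilCDl !bilCZl bilC_a_perp // mulr0 addr0.
by rewrite scalerDl addrA.
Qed.

Lemma conj_tdot (z : Lam) : bilC n (conjv t) (toC z) = ((tdot z)^*)%C.
Proof. by rewrite -bilC_conj conjv_toC. Qed.

Lemma orbit_dense_of_tdot_dense : tdot_dense ->
  forall x, in_fiber a t x -> orbit_dense_in_fiber n a t x.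
Proof.
move=> dense x [u [c [u_neq0 ->]]] y [u' [c' [u'_neq0 ->]]] _ /gtc0_real[E E_gt0 ->].
set A := \sum_j normc ((a 0 j)%:~R : C).
have a_le j : normc ((a 0 j)%:~R : C) <= A.
  by rewrite /A (bigD1 j) //= lerDl sumr_ge0 // => k _; apply: normc_ge0.
have A_ge0 : 0 <= A by apply: le_trans (a_le 0); apply: normc_ge0.
set K := normc u' * A + 1.
have K_gt0 : 0 < K by rewrite /K ltr_pwDr // mulr_ge0 ?normc_ge0.
have [z za0 z_close] := dense (c' / u' - c / u) (E / K) (divr_gt0 E_gt0 K_gt0).
exists z, (u' / u); split => //; split; first by rewrite mulf_neq0 ?invr_eq0.
move=> i; rewrite gact_fiber // !mxE ltc_normc.
have -> : u' / u * (u * t 0 i + (c + u * tdot z) * (a 0 i)%:~R) -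
    (u' * t 0 i + c' * (a 0 i)%:~R) = (tdot z - (c' / u' - c / u)) * (u' * (a 0 i)%:~R).
  by field; apply/andP.
rewrite normcM; apply: (@le_lt_trans _ _ (E / K * (K - 1))).
  rewrite normcM /K addrK; apply: ler_pM; rewrite ?mulr_ge0 ?normc_ge0 //.
    exact: ltW.
  by apply: ler_wpM2l => //; apply: normc_ge0.
by rewrite mulrBr mulr1 divfK ?lt0r_neq0 // ltrBlDr ltrDl divr_gt0.
Qed.

Lemma t_perp_a : bilC n t (toC a) = 0.
Proof. by case: lift_t. Qed.

Lemma t_a_minor_neq0 : exists i j, t 0 i * toC a 0 j - t 0 j * toC a 0 i != 0.
Proof.
apply: contrapT => minors0; have [j aj_neq0] := primitive_neq0_coord prim_a.
have ajC_neq0 : toC a 0 j != 0 by rewrite mxE intr_eq0.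
have t_coll : t = (t 0 j / toC a 0 j) *: toC a.
  apply/rowP => i; rewrite [RHS]mxE; apply: (mulIf ajC_neq0); rewrite mulrAC divfK //.
  apply/eqP; rewrite -subr_eq0; apply/negPn/negP => minor_neq0.
  by apply: minors0; exists i, j.
case: lift_t => _ _; rewrite t_coll conjvZ conjv_toC bilCZl bilCZr bil_toC iso_a.
by rewrite !mulr0 ltxx.
Qed.

Lemma tdot_dense_of_orbit_dense x :
  in_fiber a t x -> orbit_dense_in_fiber n a t x -> tdot_dense.
Proof.
(* An orbit point lam (u t + (c + u (t, z)) alpha) close to t + (c / u + p) alpha
   forces lam u ~ 1 and lam (c + u (t, z)) ~ c / u + p, read off on two
   coordinates where t and alpha are independent. *)
move=> [u [c [u_neq0 ->]]] x_dense p e e_gt0.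
have [i [j D_neq0]] := t_a_minor_neq0.
set D := t 0 i * toC a 0 j - t 0 j * toC a 0 i in D_neq0.
set P := c / u + p; have P_ge0 := normc_ge0 P.
set N := normc (t 0 i) + normc (t 0 j) + normc (toC a 0 i) + normc (toC a 0 j).
have N_ge0 : 0 <= N by rewrite !addr_ge0 ?normc_ge0.
set d := e / (2 * (1 + normc P) * (2 + e)).
have d_gt0 : 0 < d by rewrite divr_gt0 // !mulr_gt0 //; lra.
have d_small : d <= 2^-1 by rewrite ler_pdivrMr ?mulr_gt0 //; nra.
set ep := d * normc D / (N + 1).
have dD_gt0 : 0 < d * normc D by rewrite mulr_gt0 ?normc_gt0.
have ep_gt0 : 0 < ep by apply: divr_gt0; lra.
have ep_le : ep * N <= d * normc D.
  by rewrite /ep mulrAC ler_pdivrMr; [apply: ler_wpM2l | ]; lra.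
have y_fiber : in_fiber a t (1 *: t + P *: toC a) by exists 1, P; rewrite oner_eq0.
have [z [lam [za0 [lam_neq0 close]]]] := x_dense _ y_fiber ep%:C ltac:(by rewrite ltcR).
exists z => //; set A := lam * u; set B := lam * (c + u * tdot z).
have close_k k : normc ((A - 1) * t 0 k + (B - P) * toC a 0 k) < ep.
  have := close k; rewrite gact_fiber // ltc_normc !mxE.
  by congr (normc _ < _); rewrite /A /B; ring.
have -> : tdot z - p = B / A - P by rewrite /A /B /P; field; rewrite u_neq0 lam_neq0.
apply: le_lt_trans (ratio_close_of_rows D_neq0 d_small ep_le close_k) _.
have -> : 2 * d * (1 + normc P) = e / (2 + e) by rewrite /d; field; apply/andP; split; lra.
by rewrite ltr_pdivrMr; nra.
Qed.

Lemma special_form_integral (v : Lam) (u w c : C) :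
  toC v = u *: t + w *: conjv t + c *: toC a ->
  forall z, bil n z a = 0 -> u * tdot z + w * ((tdot z)^*)%C = (bil n v z)%:~R.
Proof.
move=> hv z za0; rewrite -bil_toC hv !bilCDl !bilCZl bilC_a_perp // conj_tdot.
by rewrite mulr0 addr0.
Qed.

Lemma not_special_of_tdot_dense : tdot_dense -> ~ special n a t.
Proof.
move=> dense [v [u [w [c [va0 v_notin hv]]]]].
have uw_neq0 : (u != 0) || (w != 0).
  apply/negPn/negP; rewrite negb_or !negbK => /andP[/eqP u0 /eqP w0].
  move: hv; rewrite u0 w0 !scale0r !add0r => /(primitive_toC_collinear prim_a)[k v_eq].
  by have := v_notin k; rewrite v_eq eqxx.
pose G s := exists2 z, bil n z a = 0 & s = tdot z.
apply: (@integral_form_not_dense _ G _ _ uw_neq0).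
  by move=> _ [z za0 ->]; exists (bil n v z); apply: special_form_integral hv z za0.
move=> p e e_gt0; have [z za0 z_close] := dense p e e_gt0.
by exists (tdot z) => //; exists z.
Qed.

Lemma special_of_integral_form (u w : C) : u != 0 ->
  (forall z, bil n z a = 0 -> exists k : int, u * tdot z + w * ((tdot z)^*)%C = k%:~R) ->
  special n a t.
Proof.
move=> u_neq0 F_int; set y := u *: t + w *: conjv t.
have y_pair z : bilC n y (toC z) = u * tdot z + w * ((tdot z)^*)%C.
  by rewrite bilCDl !bilCZl conj_tdot.
have y_int z : bil n z a = 0 -> exists k : int, bilC n y (toC z) = k%:~R.
  by rewrite y_pair; apply: F_int.
have a_neq0 : a != 0 by case: prim_a.
have [v [d [c [d_neq0 hv]]]] := perp_integral_lift hn a_neq0 y_int.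
have tbar_perp_a : bilC n (conjv t) (toC a) = 0.
  by rewrite -conjv_toC bilC_conj t_perp_a conjc0.
have tbar_tbar : bilC n (conjv t) (conjv t) = 0.
  by rewrite bilC_conj; case: lift_t => _ -> _; rewrite conjc0.
exists v, (d%:~R * u), (d%:~R * w), c; split.
- apply/eqP; rewrite -(eqr_int C) -bil_toC hv bilCDl !bilCZl bilCDl !bilCZl.
  by rewrite t_perp_a tbar_perp_a bil_toC iso_a !(mulr0, addr0).
- move=> k; apply/eqP => v_eq.
  have := congr1 (fun x => bilC n x (conjv t)) hv; rewrite /= v_eq toCZ bilCZl.
  rewrite bilCDl !bilCZl /y bilCDl !bilCZl tbar_tbar !(bilC_sym n (toC a) (conjv t)).
  rewrite tbar_perp_a !(mulr0, addr0) => /esym/eqP.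
  rewrite !mulf_eq0 intr_eq0 (negbTE d_neq0) (negbTE u_neq0) /=.
  by case: lift_t => _ _ /lt0r_neq0/negbTE ->.
- by rewrite hv /y scalerDr !scalerA.
Qed.

Lemma tdot_dense_of_not_special : ~ special n a t -> tdot_dense.
Proof.
move=> not_special p e e_gt0.
pose G s := exists2 z, bil n z a = 0 & s = tdot z.
have G0 : G 0 by exists 0; rewrite ?bil0l // /tdot toC0 bilC0r.
have GB x y : G x -> G y -> G (x - y).
  move=> [z za0 ->] [z' z'a0 ->]; exists (z - z'); first by rewrite bilBl za0 z'a0 subrr.
  by rewrite /tdot toCB bilCBr.
have not_discrete b m : b != 0 -> 0 < m ->
    ~ (forall g, G g -> exists k : int, Im (b * g) = k%:~R * m).
  move=> b_neq0 m_gt0 discrete; apply: not_special.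
  have mC_neq0 : m%:C != 0 by apply: contraTneq m_gt0 => -[->]; rewrite ltxx.
  pose u := - (b * 'i%C) / 2 / m%:C; pose w := ((b^*)%C * 'i%C) / 2 / m%:C.
  have F_Im s : u * s + w * (s^*)%C = (Im (b * s))%:C / m%:C.
    by rewrite Im_mul_real_linear /u /w; field.
  apply: (@special_of_integral_form u w).
    have i_neq0 : 'i%C != 0 :> C by rewrite eq_complex /= oner_eq0 andbF.
    by rewrite /u !mulf_neq0 ?oppr_eq0 ?invr_eq0 ?pnatr_eq0 // mulf_neq0.
  move=> z za0; have [k hk] := discrete _ (ex_intro2 _ _ z za0 erefl).
  by exists k; rewrite F_Im hk rmorphM /= -intC mulfK.
have [_ [z za0 ->] close] := subgroup_dense G0 GB not_discrete p e_gt0.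
by exists z.
Qed.

Lemma tdot_dense_iff_not_special : tdot_dense <-> ~ special n a t.
Proof. by split; [apply: not_special_of_tdot_dense | apply: tdot_dense_of_not_special]. Qed.

Lemma some_orbit_dense_iff :
  (exists x, in_fiber a t x /\ orbit_dense_in_fiber n a t x) <-> tdot_dense.
Proof.
split=> [[x [x_fiber x_dense]] | dense]; first exact: tdot_dense_of_orbit_dense x_fiber x_dense.
have t_fiber : in_fiber a t t by exists 1, 0; rewrite oner_eq0 scale1r scale0r addr0.
by exists t; split=> //; apply: orbit_dense_of_tdot_dense.
Qed.

End FiberOrbits.

Local Close Scope complex_scope.

Theorem lemma5p4 (R : realType) (n : nat) (hn : (2 <= n)%N) (a : 'rV[int]_23)
    (ha_prim : primitive a) (ha_iso : bil n a a = 0)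
    (t : 'rV[R[i]]_23) (ht : Q_period_lift n a t) :
  ((exists x : 'rV[R[i]]_23, in_fiber a t x /\ orbit_dense_in_fiber n a t x)
     <-> ~ special n a t)
  /\
  ((exists x : 'rV[R[i]]_23, in_fiber a t x /\ orbit_dense_in_fiber n a t x) ->
     forall x : 'rV[R[i]]_23, in_fiber a t x -> orbit_dense_in_fiber n a t x).
Proof.
have some_dense := some_orbit_dense_iff ha_prim ha_iso ht.
have dense_iff := tdot_dense_iff_not_special hn ha_prim ha_iso ht.
split; first by split=> [/some_dense/dense_iff | /dense_iff/some_dense].
by move=> /some_dense; apply: orbit_dense_of_tdot_dense.
Qed.
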